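(* Let $n\ge2$, $N\ge2n+1$, $\alpha_2,\dots,\alpha_n$ real, $\alpha_1=1$. Consider the open ($k=-1$) $N$-dimensional metric $ds^2=-dt^2+a(t)^2\left(\frac{dr^2}{1+r^2}+r^2d\Omega_{N-2}^2\right)$ and the pressure ($p$) component of the Lovelock field equations with $p=0$, namely $$-(N-2)\left(\frac{N-3}{2}\Big(\frac{\dot a^2}{a^2}-\frac{1}{a^2}\Big)+\frac{\ddot a}{a}\right)+\sum_{i=2}^{n}\alpha_i\left[{}^{(i)}k_{11}\Big(\frac{\dot a^2}{a^2}-\frac{1}{a^2}\Big)^i+{}^{(i)}k_{12}\,\frac{\ddot a}{a}\Big(\frac{\dot a^2}{a^2}-\frac{1}{a^2}\Big)^{i-1}\right]=0 .$$ Let $C_1$ be a real root of $2-N+\sum_{i=2}^n\alpha_i\,{}^{(i)}k_{12}\,\frac{C_1^{i-1}}{i}=0$ (equivalently a nonzero root of $\sum_{i=1}^n\alpha_i\,{}^{(i)}k_{12}\,C_1^i/i=0$, with ${}^{(1)}k_{12}=-(N-2)$). Then $$a(t)=\frac{1}{\sqrt{C_1}}\sinh\big(\sqrt{C_1}\,t\big)=\sum_{j\ge0}\frac{C_1^{\,j}\,t^{2j+1}}{(2j+1)!}$$ is a solution of this pressure-free equation with $a(0)=0$.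
   Context: Dots denote $d/dt$ ($t$ cosmic time). This equation is the spatial ($p$) component of the Lovelock field equations $\sum_i\alpha_i\,{}^{(i)}\mathcal{H}^a_{\ b}=T^a_{\ b}$ for a perfect fluid in the FRW metric. Coefficients (binomial coefficients $\binom{a}{b}$, zero when $b<0$): ${}^{(i)}k_{11}=-\tfrac12(2(i-1))!\,(N-2)(N-1-2i)\binom{N-3}{2(i-1)}$, ${}^{(i)}k_{12}=-\tfrac12(2(i-1))!\left[2(N-i-1)\binom{N-2}{2(i-1)}+(N-2)(N-1-2i)\binom{N-3}{2i-3}\right]$. *)

From Stdlib Require Import Reals Lra Lia ZArith List.
From Coquelicot Require Import Coquelicot.
Open Scope R_scope.

Fixpoint binom (n k : nat) : nat :=
  match n, k with
  | _, O => 1%nat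
  | O, S _ => 0%nat
  | S n', S k' => (binom n' k' + binom n' (S k'))%nat
  end.

Definition binZ (a : nat) (b : Z) : R :=
  if (b <? 0)%Z then 0 else INR (binom a (Z.to_nat b)).

Definition k11 (N i : nat) : R :=
  - / 2 * INR (fact (2 * (i - 1))) * (INR N - 2) * (INR N - 1 - 2 * INR i)
    * binZ (N - 3) (2 * (Z.of_nat i - 1))%Z.

Definition k12 (N i : nat) : R :=
  - / 2 * INR (fact (2 * (i - 1))) *
    (2 * (INR N - INR i - 1) * binZ (N - 2) (2 * (Z.of_nat i - 1))%Z
     + (INR N - 2) * (INR N - 1 - 2 * INR i) * binZ (N - 3) (2 * Z.of_nat i - 3)%Z).

Definition sumRange (lo hi : nat) (f : nat -> R) : R :=
  fold_right Rplus 0 (map f (seq lo (S hi - lo))).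

(* LHS of the pressure (p) component of the Lovelock equations, k = -1,
   with alpha_1 = 1 written out explicitly, given a, adot, addot at time t *)
Definition lovelock_p (N n : nat) (alpha : nat -> R) (a ad add : R) : R :=
  let H := ad ^ 2 / a ^ 2 - 1 / a ^ 2 in
  - (INR N - 2) * ((INR N - 3) / 2 * H + add / a)
  + sumRange 2 n (fun i => alpha i *
       (k11 N i * H ^ i + k12 N i * (add / a) * H ^ (i - 1))).

Definition a_sol (C : R) (t : R) : R :=
  Series (fun j => C ^ j * t ^ (2 * j + 1) / INR (fact (2 * j + 1))).

(* The series a = sinhC C1 and its derivative coshC C1 satisfy a'' = C1 a and
   a'^2 - C1 a^2 = 1 (the left side has zero derivative and equals 1 at t = 0).
   Hence both (a'^2 - 1)/a^2 and a''/a are the constant C1, and the binomial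
   absorption identity gives k11 + k12 = (N - 1)/(2i) k12, so the pressure
   equation collapses to (N - 1)/2 * C1 times the polynomial of which C1 is a
   root. *)
From Stdlib Require Import Reals Lra Lia ZArith List FunctionalExtensionality.
From Coquelicot Require Import Coquelicot.
Open Scope R_scope.

Lemma binom_1 (n : nat) : binom n 1 = n.
Proof. induction n as [|n IH]; [reflexivity|]. destruct n; simpl in *; lia. Qed.

Lemma binom_absorb (n k : nat) :
  (S k * binom n (S k) + k * binom n k = n * binom n k)%nat.
Proof.
  revert k; induction n as [|n IH]; intros [|k].
  - reflexivity.
  - simpl; lia.
  - rewrite binom_1; simpl; lia.
  - cbn [binom]. pose proof (IH k). pose proof (IH (S k)). nia.
Qed.

Lemma binZ_of_nat (a k : nat) : binZ a (Z.of_nat k) = INR (binom a k).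
Proof.
  unfold binZ. destruct (Z.ltb_spec (Z.of_nat k) 0); [lia|].
  now rewrite Nat2Z.id.
Qed.

Lemma k11_add_k12 (N i : nat) : (2 <= i)%nat -> (3 <= N)%nat ->
  k11 N i + k12 N i = (INR N - 1) / (2 * INR i) * k12 N i.
Proof.
  intros Hi HN.
  destruct (Nat.le_exists_sub 2 i Hi) as [j [-> _]].
  destruct (Nat.le_exists_sub 3 N HN) as [m [-> _]].
  unfold k11, k12.
  replace (2 * (Z.of_nat (j + 2) - 1))%Z with (Z.of_nat (S (2 * j + 1))) by lia.
  replace (2 * Z.of_nat (j + 2) - 3)%Z with (Z.of_nat (2 * j + 1)) by lia.
  replace (m + 3 - 3)%nat with m by lia.
  replace (m + 3 - 2)%nat with (S m) by lia.
  rewrite !binZ_of_nat. cbn [binom].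
  pose proof (binom_absorb m (2 * j + 1)) as Habs.
  apply (f_equal INR) in Habs.
  rewrite !plus_INR, !mult_INR, !S_INR, !plus_INR, !mult_INR in *.
  set (B := INR (binom m (2 * j + 1))) in *.
  set (X := INR (binom m (S (2 * j + 1)))) in *.
  assert (0 <= INR j) by apply pos_INR.
  replace X with ((INR m - 2 * INR j - 1) * B / (2 * INR j + 2))
    by (simpl in Habs; field_simplify_eq; lra).
  simpl. field. lra.
Qed.

Lemma sumRange_ext_in (lo hi : nat) (f g : nat -> R) :
  (forall i, (lo <= i <= hi)%nat -> f i = g i) -> sumRange lo hi f = sumRange lo hi g.
Proof.
  intros Hfg. unfold sumRange. f_equal. apply map_ext_in.
  intros i Hi. apply in_seq in Hi. apply Hfg. lia.
Qed.

Lemma sumRange_scal_l (lo hi : nat) (c : R) (f : nat -> R) :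
  sumRange lo hi (fun i => c * f i) = c * sumRange lo hi f.
Proof.
  unfold sumRange. induction (seq lo (S hi - lo)) as [|i l IH]; simpl.
  - ring.
  - rewrite IH. ring.
Qed.

Lemma lovelock_p_const_rates (N n : nat) (alpha : nat -> R) (a ad add C : R) :
  (3 <= N)%nat -> ad ^ 2 / a ^ 2 - 1 / a ^ 2 = C -> add / a = C ->
  lovelock_p N n alpha a ad add =
  (INR N - 1) / 2 * C *
  (2 - INR N + sumRange 2 n (fun i => alpha i * k12 N i * C ^ (i - 1) / INR i)).
Proof.
  intros HN HH Hacc. unfold lovelock_p. cbv zeta. rewrite HH, Hacc.
  rewrite (sumRange_ext_in _ _ _
    (fun i => (INR N - 1) / 2 * C * (alpha i * k12 N i * C ^ (i - 1) / INR i))).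
  - rewrite sumRange_scal_l. field.
  - intros i Hi.
    assert (0 < INR i) by (apply lt_0_INR; lia).
    replace (C ^ i) with (C * C ^ (i - 1))
      by (rewrite tech_pow_Rmult; f_equal; lia).
    replace (k11 N i) with ((INR N - 1) / (2 * INR i) * k12 N i - k12 N i)
      by (rewrite <- k11_add_k12 by lia; ring).
    field. lra.
Qed.

Lemma CV_radius_infinite_of_CV_disk (a : nat -> R) :
  (forall x, CV_disk a x) -> CV_radius a = p_infty.
Proof.
  intros Hdisk. unfold CV_radius.
  destruct (Lub_Rbar_correct (CV_disk a)) as [Hub _].
  destruct (Lub_Rbar (CV_disk a)) as [l| |]; [| reflexivity |].
  - specialize (Hub (l + 1) (Hdisk _)). simpl in Hub. lra.
  - destruct (Hub 0 (Hdisk 0)).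
Qed.

Lemma CV_radius_infinite_of_fact_bound (a : nat -> R) (D : R) :
  (forall n, Rabs (a n) <= D ^ n / INR (fact n)) -> CV_radius a = p_infty.
Proof.
  intros Ha. apply CV_radius_infinite_of_CV_disk. intros x.
  set (y := D * Rabs x).
  assert (Hexp : ex_series (fun n => y ^ n / INR (fact n))).
  { exists (exp y). refine (is_series_ext _ _ _ _ (is_exp_Reals y)).
    intros n. rewrite pow_n_pow. reflexivity. }
  refine (@ex_series_le R_AbsRing R_CompleteNormedModule _ _ _ Hexp).
  intros n. change (Rabs (Rabs (a n * x ^ n)) <= y ^ n / INR (fact n)).
  rewrite Rabs_Rabsolu, Rabs_mult, <- RPow_abs.
  unfold y. rewrite Rpow_mult_distr.
  replace (D ^ n * Rabs x ^ n / INR (fact n)) with (D ^ n / INR (fact n) * Rabs x ^ n) by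
    (unfold Rdiv; ring).
  apply Rmult_le_compat_r; [apply pow_le, Rabs_pos | apply Ha].
Qed.

Lemma pow_div_fact_bound (C : R) (k m n : nat) : (k <= m)%nat -> (m <= n)%nat ->
  Rabs (C ^ k / INR (fact n)) <= (1 + Rabs C) ^ m / INR (fact m).
Proof.
  intros Hkm Hmn. pose proof (INR_fact_lt_0 m). pose proof (Rabs_pos C).
  unfold Rdiv. rewrite Rabs_mult, <- RPow_abs, Rabs_inv, (Rabs_right (INR (fact n)))
    by (apply Rle_ge, pos_INR).
  apply Rmult_le_compat.
  - apply pow_le, Rabs_pos.
  - left. apply Rinv_0_lt_compat, INR_fact_lt_0.
  - apply Rle_trans with ((1 + Rabs C) ^ k); [apply pow_incr; lra|].
    apply Rle_pow; [lra | exact Hkm].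
  - apply Rinv_le_contravar; [lra|]. apply le_INR, fact_le, Hmn.
Qed.

(* For C > 0, sinhC C t = sinh (sqrt C t) / sqrt C and coshC C t = cosh (sqrt C t);
   for C < 0 they are the corresponding sin and cos. *)
Definition sinhC_coef (C : R) (n : nat) : R :=
  if Nat.odd n then C ^ Nat.div2 n / INR (fact n) else 0.
Definition coshC_coef (C : R) (n : nat) : R :=
  if Nat.even n then C ^ Nat.div2 n / INR (fact n) else 0.

Definition sinhC (C : R) : R -> R := PSeries (sinhC_coef C).
Definition coshC (C : R) : R -> R := PSeries (coshC_coef C).

Lemma parity_coef_bound (C : R) (b : bool) (n : nat) :
  Rabs (if b then C ^ Nat.div2 n / INR (fact n) else 0) <= (1 + Rabs C) ^ n / INR (fact n).
Proof.
  pose proof (pow_div_fact_bound C 0 n n (Nat.le_0_l n) (Nat.le_refl n)) as H0.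
  destruct b.
  - apply pow_div_fact_bound; [apply Nat.le_div2_diag_l | apply Nat.le_refl].
  - rewrite Rabs_R0. exact (Rle_trans _ _ _ (Rabs_pos _) H0).
Qed.

Lemma CV_radius_sinhC_coef (C : R) : CV_radius (sinhC_coef C) = p_infty.
Proof.
  apply (CV_radius_infinite_of_fact_bound _ (1 + Rabs C)). intros n. apply parity_coef_bound.
Qed.

Lemma CV_radius_coshC_coef (C : R) : CV_radius (coshC_coef C) = p_infty.
Proof.
  apply (CV_radius_infinite_of_fact_bound _ (1 + Rabs C)). intros n. apply parity_coef_bound.
Qed.

Lemma PS_derive_sinhC_coef (C : R) (n : nat) :
  PS_derive (sinhC_coef C) n = coshC_coef C n.
Proof.
  unfold PS_derive, sinhC_coef, coshC_coef. rewrite Nat.odd_succ.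
  destruct (Nat.even n) eqn:Hn; [|ring].
  rewrite <- (Nat.Even_div2 n) by now apply Nat.even_spec.
  rewrite fact_simpl, mult_INR.
  pose proof (INR_fact_lt_0 n). pose proof (lt_0_INR (S n) (Nat.lt_0_succ n)).
  field. lra.
Qed.

Lemma PS_derive_coshC_coef (C : R) (n : nat) :
  PS_derive (coshC_coef C) n = PS_scal C (sinhC_coef C) n.
Proof.
  unfold PS_derive, PS_scal, sinhC_coef, coshC_coef. rewrite Nat.even_succ.
  change scal with Rmult.
  destruct (Nat.odd n) eqn:Hn; [|ring].
  rewrite <- (Nat.Odd_div2 n) by now apply Nat.odd_spec.
  rewrite fact_simpl, mult_INR, <- tech_pow_Rmult.
  pose proof (INR_fact_lt_0 n). pose proof (lt_0_INR (S n) (Nat.lt_0_succ n)).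
  field. lra.
Qed.

Lemma is_derive_sinhC (C t : R) : is_derive (sinhC C) t (coshC C t).
Proof.
  unfold sinhC, coshC.
  rewrite <- (PSeries_ext _ _ _ (PS_derive_sinhC_coef C)).
  apply is_derive_PSeries. rewrite CV_radius_sinhC_coef. exact I.
Qed.

Lemma is_derive_coshC (C t : R) : is_derive (coshC C) t (C * sinhC C t).
Proof.
  unfold sinhC, coshC.
  rewrite <- PSeries_scal, <- (PSeries_ext _ _ _ (PS_derive_coshC_coef C)).
  apply is_derive_PSeries. rewrite CV_radius_coshC_coef. exact I.
Qed.

Lemma coshC_sq_sub_sinhC_sq (C t : R) : coshC C t ^ 2 - C * sinhC C t ^ 2 = 1.
Proof.
  set (g x := coshC C x ^ 2 - C * sinhC C x ^ 2).
  assert (Hg : forall x, is_derive g x 0).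
  { intros x. unfold g.
    evar (l : R). replace 0 with l; unfold l.
    - apply (is_derive_minus (fun x => coshC C x ^ 2)).
      + apply is_derive_pow, is_derive_coshC.
      + apply is_derive_scal, is_derive_pow, is_derive_sinhC.
    - unfold minus, plus, opp, scal; simpl; unfold mult; simpl. ring. }
  assert (Hg0 : g 0 = 1).
  { unfold g, sinhC, coshC. rewrite !PSeries_0. unfold sinhC_coef, coshC_coef. simpl. field. }
  change (g t = 1). rewrite <- Hg0.
  destruct (Rtotal_order t 0) as [Hlt|[->|Hgt]]; [| reflexivity |].
  - apply eq_is_derive; [intros; apply Hg | exact Hlt].
  - symmetry. apply eq_is_derive; [intros; apply Hg | exact Hgt].
Qed.

Lemma a_sol_sinhC (C : R) : a_sol C = sinhC C.
Proof.
  apply functional_extensionality. intros t. unfold sinhC.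
  assert (Heven : forall m, sinhC_coef C (2 * m) = 0).
  { intros m. unfold sinhC_coef. now rewrite Nat.odd_even. }
  assert (Hodd : forall m, sinhC_coef C (2 * m + 1) = C ^ m / INR (fact (2 * m + 1))).
  { intros m. unfold sinhC_coef. rewrite Nat.odd_odd, Nat.add_1_r, Nat.div2_succ_double.
    reflexivity. }
  rewrite PSeries_odd_even.
  - rewrite (PSeries_ext _ _ _ Heven), PSeries_const_0, Rplus_0_l, (PSeries_ext _ _ _ Hodd).
    unfold PSeries, a_sol. rewrite <- Series_scal_l. apply Series_ext. intros m.
    rewrite <- pow_mult, pow_add. unfold Rdiv. ring.
  - apply (ex_pseries_ext (fun _ => 0)); [intros m; now rewrite Heven|].
    apply CV_radius_inside. rewrite CV_radius_const_0. exact I.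
  - apply (ex_pseries_ext _ _ _ (fun m => eq_sym (Hodd m))), CV_radius_inside.
    rewrite (CV_radius_infinite_of_fact_bound _ (1 + Rabs C)); [exact I|].
    intros m. apply pow_div_fact_bound; lia.
Qed.

Theorem mainTheorem4 (n N : nat) (alpha : nat -> R) (C1 : R) :
  (2 <= n)%nat -> (2 * n + 1 <= N)%nat -> alpha 1%nat = 1 ->
  2 - INR N + sumRange 2 n (fun i => alpha i * k12 N i * C1 ^ (i - 1) / INR i) = 0 ->
  a_sol C1 0 = 0 /\
  (forall t, ex_derive (a_sol C1) t /\ ex_derive (Derive (a_sol C1)) t) /\
  (forall t, a_sol C1 t <> 0 ->
     lovelock_p N n alpha (a_sol C1 t) (Derive (a_sol C1) t)
       (Derive (Derive (a_sol C1)) t) = 0).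
Proof.
  (* alpha_1 = 1 is already built into lovelock_p. *)
  intros Hn HN _ Hroot.
  assert (Hderiv : Derive (sinhC C1) = coshC C1).
  { apply functional_extensionality. intros t. apply is_derive_unique, is_derive_sinhC. }
  rewrite a_sol_sinhC, Hderiv. split; [|split].
  - unfold sinhC. rewrite PSeries_0. reflexivity.
  - intros t. split; eexists; [apply is_derive_sinhC | apply is_derive_coshC].
  - intros t Ha.
    pose proof (coshC_sq_sub_sinhC_sq C1 t) as Hfirst_integral.
    assert (HH : coshC C1 t ^ 2 / sinhC C1 t ^ 2 - 1 / sinhC C1 t ^ 2 = C1)
      by (field_simplify_eq; [lra | exact Ha]).
    assert (Hacc : C1 * sinhC C1 t / sinhC C1 t = C1) by (field; exact Ha).
    rewrite (is_derive_unique _ _ _ (is_derive_coshC C1 t)).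
    rewrite (lovelock_p_const_rates N n alpha _ _ _ C1 ltac:(lia) HH Hacc), Hroot.
    ring.
Qed.
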